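(* Let $l\le k$ be non-negative integers. Then $S(k,k,l)=\binom{k}{l}^2$.
   Context: A Dyck path of semilength $k$ (Dyck $k$-path) is a lattice path in $\mathbb{Z}^2$ starting at $(0,0)$, ending at $(2k,0)$, never going below the $x$-axis, each of whose $2k$ steps is either a rise $(1,1)$ or a fall $(1,-1)$. For a Dyck $k$-path $D$ and non-negative integers $l\le m\le 2k$, $S(D,m,l)$ denotes the number of intervals of length $m$ in $D$ (i.e. blocks of $m$ consecutive steps of $D$, one for each starting position $s\in\{1,\dots,2k-m+1\}$) that contain exactly $l$ falls; and $S(k,m,l)=\sum_{D} S(D,m,l)$, the sum over all Dyck $k$-paths $D$. *)

From mathcomp Require Import all_boot.
Set Implicit Arguments. Unset Strict Implicit. Unset Printing Implicit Defensive.

(* A lattice path with steps in {rise, fall} is encoded as a sequence of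
   booleans: true = rise (1,1), false = fall (1,-1). *)

Definition nrises (s : seq bool) : nat := count id s.
Definition nfalls (s : seq bool) : nat := count negb s.

Definition is_dyck (k : nat) (D : seq bool) : bool :=
  [&& size D == 2 * k,
      all (fun i => nfalls (take i D) <= nrises (take i D)) (iota 0 (size D).+1)
    & nfalls D == nrises D].

(* the interval of length m starting at (1-based) position s+1 *)
Definition interval (D : seq bool) (s m : nat) : seq bool := take m (drop s D).

(* S(D,m,l): number of starting positions s in {1,...,|D|-m+1} such that the
   block of m consecutive steps starting at s contains exactly l falls *)
Definition SD (D : seq bool) (m l : nat) : nat :=
  count (fun s => nfalls (interval D s m) == l) (iota 0 (size D - m).+1).

Definition Skml (k m l : nat) : nat :=
  \sum_(D : (2 * k).-tuple bool | is_dyck k D) SD D m l.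

From mathcomp Require Import all_boot zify.
Set Implicit Arguments. Unset Strict Implicit. Unset Printing Implicit Defensive.

(* Write a Dyck path of semilength k as D = A ++ W ++ B with |W| = k, and
   record the completion (A, B) of the window W by the word V = B ++ rise :: A
   of length k + 1.  Cutting V after that rise and inserting W gives D back; by
   a cycle-lemma argument at most one rise of V yields a Dyck path, and one
   does exactly when V has nfalls W + 1 rises and dips far enough below its
   start.  The reflection principle then counts the completions of W as
   C(k+1, nrises W + depth W + 1).  By Pascal's rule this is the number of
   windows Y with l falls and depth Y > depth W plus those with
   depth Y >= depth W, so summing over W counts every ordered pair (W, Y) of
   windows with l falls exactly once: C(k, l)^2 in total. *)

Lemma sum_nat_of_bool (T : Type) (r : seq T) (a : pred T) :
  \sum_(x <- r) a x = count a r.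
Proof. by rewrite -sum1_count [RHS]big_mkcond; apply: eq_bigr => x _; case: (a x). Qed.

Lemma sum_count_ltn_leq (T : Type) (r : seq T) (f : T -> nat) :
  \sum_(x <- r) (count (fun y => f x < f y) r + count (fun y => f x <= f y) r)
  = size r ^ 2.
Proof.
rewrite big_split /= -!(eq_bigr _ (fun x _ => sum_nat_of_bool _ _)) exchange_big.
rewrite -big_split -mulnn -{1}(sum1_size r) big_distrl.
apply: eq_bigr => x _; rewrite /= mul1n -(sum1_size r) -big_split.
by apply: eq_bigr => y _; rewrite ltnNge; case: leqP.
Qed.

(* [depth s] is how far the path [s] descends below its starting level. *)
Fixpoint depth (s : seq bool) : nat :=
  if s is b :: s' then (if b then (depth s').-1 else (depth s').+1) else 0.

Lemma nrises_nfalls s : nrises s + nfalls s = size s.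
Proof. exact: count_predC. Qed.

Lemma nfalls_leq_depth s : nfalls s <= nrises s + depth s.
Proof. by elim: s => [|[] s IH] //=; rewrite /nfalls /nrises /= in IH *; lia. Qed.

Lemma depth_cat s t :
  depth (s ++ t) = maxn (depth s) (depth t + nfalls s - nrises s).
Proof. by elim: s => [|[] s IH] /=; rewrite ?IH /nfalls /nrises /=; lia. Qed.

Lemma nfalls_take_leq_depth s i : nfalls (take i s) <= nrises (take i s) + depth s.
Proof. by have := depth_cat (take i s) (drop i s); rewrite cat_take_drop; lia. Qed.

Lemma depth_attained s :
  exists2 i, i <= size s & nrises (take i s) + depth s = nfalls (take i s).
Proof.
elim: s => [|[] s [i le_i Ei]] /=; first by exists 0.
  case: (posnP (depth s)) => [-> | d_gt0]; first by exists 0.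
  by exists i.+1; rewrite /nrises /nfalls /= in Ei *; lia.
by exists i.+1; rewrite /nrises /nfalls /= in Ei *; lia.
Qed.

Definition dyck_word (D : seq bool) : bool := (depth D == 0) && (nrises D == nfalls D).

Lemma is_dyckE k D : size D = 2 * k -> is_dyck k D = dyck_word D.
Proof.
move=> sizeD; rewrite /is_dyck /dyck_word sizeD eqxx andTb [nfalls D == _]eq_sym.
congr andb; apply/allP/eqP => [prefix_ok | d0 i _].
  have [i le_i Ei] := depth_attained D.
  by have := prefix_ok i; rewrite mem_iota -sizeD; lia.
by have := nfalls_take_leq_depth D i; lia.
Qed.

Fixpoint bseqs n : seq (seq bool) :=
  if n is n'.+1 then [seq true :: s | s <- bseqs n'] ++ [seq false :: s | s <- bseqs n']
  else [:: [::]].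

Lemma cons_inj (b : bool) : injective (cons b).
Proof. by move=> s t []. Qed.

Lemma mem_bseqs n s : (s \in bseqs n) = (size s == n).
Proof.
elim: n s => [|n IH] [|[] s] //=; rewrite mem_cat.
- by do 2!case: mapP => [[]|].
- rewrite (mem_map (@cons_inj true)) IH.
  by case: mapP => [[? _ []]|_]; rewrite ?orbF.
- case: mapP => [[? _ []]|_] //=.
  by rewrite (mem_map (@cons_inj false)) IH.
Qed.

Lemma uniq_bseqs n : uniq (bseqs n).
Proof.
elim: n => [|n IH] //=.
rewrite cat_uniq !map_inj_uniq ?IH ?andbT //=; try exact: cons_inj.
by apply/hasPn => _ /mapP [s _ ->]; apply/mapP => -[].
Qed.

Lemma big_bseqs_add (R : Type) (idx : R) (op : Monoid.law idx) m n F :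
  \big[op/idx]_(s <- bseqs (m + n)) F s
  = \big[op/idx]_(s <- bseqs m) \big[op/idx]_(t <- bseqs n) F (s ++ t).
Proof. by elim: m F => [|m IH] F; rewrite ?big_seq1 //= !big_cat !big_map !IH. Qed.

Lemma big_tuple_bseqs (R : Type) (idx : R) (op : Monoid.com_law idx) n
    (P : pred (seq bool)) (F : seq bool -> R) :
  \big[op/idx]_(t : n.-tuple bool | P t) F t = \big[op/idx]_(s <- bseqs n | P s) F s.
Proof.
rewrite -(big_map (@tval n bool) P F); apply/perm_big/uniq_perm.
- by rewrite map_inj_uniq ?index_enum_uniq //; exact: val_inj.
- exact: uniq_bseqs.
move=> s; rewrite mem_bseqs; apply/mapP/eqP => [[t _ ->] | size_s].
  exact: size_tuple.
by exists (Tuple (introT eqP size_s)); rewrite ?mem_index_enum.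
Qed.

Lemma count_nrises_bseqs n u : count (fun s => nrises s == u) (bseqs n) = 'C(n, u).
Proof.
elim: n u => [|n IH] [|u] //=; rewrite count_cat !count_map.
  by rewrite (eq_count (a2 := pred0)) // count_pred0 bin0 -(bin0 n) -IH.
by rewrite binS addnC -!IH.
Qed.

(* The reflection principle; the hypothesis says the paths end at level
   [2 * u - n >= - x]. *)
Lemma count_nrises_depth_geq n u x : n <= 2 * u + x ->
  count (fun s => (nrises s == u) && (x <= depth s)) (bseqs n) = 'C(n, u + x).
Proof.
elim: n u x => [|n IH] u [|x] le_n.
- by case: u le_n.
- by case: u le_n.
- by rewrite addn0 -count_nrises_bseqs; apply: eq_count => s; rewrite andbT.
rewrite /= count_cat !count_map.
rewrite [X in _ + X](eq_count (a2 := fun s => (nrises s == u) && (x <= depth s))) //.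
rewrite IH; last lia.
case: u le_n => [|u] le_n.
  by rewrite (eq_count (a2 := pred0)) // count_pred0 !add0n binS (@bin_small n x.+1).
rewrite (eq_count (a2 := fun s => (nrises s == u) && (x.+2 <= depth s))); last first.
  by move=> s /=; congr andb; lia.
rewrite IH ?addSn ?binS; last lia.
by congr (_ + _); congr binomial; lia.
Qed.

Lemma nfalls_eqE s l : l <= size s -> (nfalls s == l) = (nrises s == size s - l).
Proof. by have := nrises_nfalls s => sum_s le_l; apply/eqP/eqP; lia. Qed.

Lemma count_nfalls_bseqs n l : l <= n -> count (fun s => nfalls s == l) (bseqs n) = 'C(n, l).
Proof.
move=> le_ln; rewrite -bin_sub // -count_nrises_bseqs.
by apply: eq_in_count => s; rewrite mem_bseqs => /eqP size_s; rewrite nfalls_eqE size_s.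
Qed.

Lemma count_nfalls_depth_geq n l x : l <= n -> 2 * l <= n + x ->
  count (fun s => (nfalls s == l) && (x <= depth s)) (bseqs n) = 'C(n, n - l + x).
Proof.
move=> le_ln le_2l; rewrite -count_nrises_depth_geq; last lia.
by apply: eq_in_count => s; rewrite mem_bseqs => /eqP size_s; rewrite nfalls_eqE size_s.
Qed.

Definition dyck_cuts (V W : seq bool) : nat :=
  count (fun j => nth false V j && dyck_word (drop j.+1 V ++ W ++ take j V)) (iota 0 (size V)).

Lemma dyck_cuts_rcons V b W :
  dyck_cuts (rcons V b) W = dyck_cuts V (b :: W) + (b && dyck_word (W ++ V)).
Proof.
rewrite /dyck_cuts size_rcons -addn1 iotaD count_cat /= add0n addn0.
congr (_ + _).
  apply: eq_in_count => j; rewrite mem_iota => /andP [_ lt_j].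
  by rewrite nth_rcons lt_j drop_rcons // cat_rcons -cats1 takel_cat // ltnW.
by rewrite nth_rcons ltnn eqxx drop_oversize ?size_rcons // -cats1 take_size_cat.
Qed.

(* A cycle lemma: at most one cut of [V] works. *)
Lemma dyck_cutsE V W : dyck_cuts V W =
  (nrises W + nrises V == (nfalls W + nfalls V).+1)
  && (nrises W + depth W - nfalls W <= depth V).
Proof.
elim/last_ind: V W => [|V b IH] W.
  by have := nfalls_leq_depth W; rewrite /dyck_cuts /nrises /nfalls /=; lia.
rewrite dyck_cuts_rcons IH /dyck_word -cats1 !depth_cat.
have := nfalls_leq_depth W; have := nfalls_leq_depth V.
by case: b; rewrite /nrises /nfalls /= !count_cat /=; lia.
Qed.

Lemma sum_dyck_cuts W :
  \sum_(V <- bseqs (size W).+1) dyck_cuts V W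
  = 'C((size W).+1, (nrises W + depth W).+1).
Proof.
have := nrises_nfalls W; have := nfalls_leq_depth W => le_W size_W.
rewrite big_seq (eq_bigr (fun V => ((nrises V == (nfalls W).+1)
    && (nrises W + depth W - nfalls W <= depth V) : nat))); last first.
  move=> V; rewrite mem_bseqs dyck_cutsE => /eqP size_V.
  have := nrises_nfalls V; rewrite size_V => ?.
  by congr (nat_of_bool (_ && _)); apply/eqP/eqP; lia.
rewrite -big_seq sum_nat_of_bool count_nrises_depth_geq; last lia.
by congr binomial; lia.
Qed.

Definition dyck_completions (p : nat) (W : seq bool) : nat :=
  \sum_(0 <= s < p.+1) \sum_(A <- bseqs s) \sum_(B <- bseqs (p - s)) dyck_word (A ++ W ++ B).

(* The completion [A ++ W ++ B] corresponds to the cut of [B ++ true :: A]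
   at position [size B]. *)
Lemma dyck_completions_cuts p W :
  dyck_completions p W = \sum_(V <- bseqs p.+1) dyck_cuts V W.
Proof.
transitivity (\sum_(V <- bseqs p.+1) \sum_(0 <= j < p.+1)
    (nth false V j && dyck_word (drop j.+1 V ++ W ++ take j V) : nat)); last first.
  apply: eq_big_seq => V; rewrite mem_bseqs => /eqP size_V.
  by rewrite /dyck_cuts -sum_nat_of_bool size_V.
rewrite /dyck_completions big_nat_rev exchange_big; apply: eq_big_nat => j /andP [_ lt_j].
rewrite add0n subSS (_ : p - (p - j) = j); last lia.
rewrite (_ : p.+1 = j + (p - j).+1); last lia.
rewrite big_bseqs_add exchange_big; apply: eq_big_seq => B.
rewrite mem_bseqs => /eqP size_B /=; rewrite big_cat !big_map /=.
rewrite [X in _ = _ + X]big1 ?addn0 => [|A _]; last by rewrite nth_cat size_B ltnn subnn.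
apply: eq_bigr => A _.
rewrite nth_cat size_B ltnn subnn /= -cat_rcons drop_size_cat ?size_rcons ?size_B //.
by rewrite cat_rcons take_size_cat.
Qed.

Lemma Skml_completions k m l : m <= 2 * k ->
  Skml k m l = \sum_(W <- bseqs m | nfalls W == l) dyck_completions (2 * k - m) W.
Proof.
move=> le_m2k.
rewrite /Skml (big_tuple_bseqs _ _ (is_dyck k) (fun D => SD D m l)) big_mkcond.
transitivity (\sum_(D <- bseqs (2 * k)) \sum_(0 <= s < (2 * k - m).+1)
    (dyck_word D && (nfalls (take m (drop s D)) == l) : nat)).
  apply: eq_big_seq => D; rewrite mem_bseqs => /eqP size_D.
  rewrite (is_dyckE size_D) /SD size_D -sum_nat_of_bool.
  by case: (dyck_word D); rewrite // big1.
rewrite exchange_big [RHS]exchange_big /=; apply: eq_big_nat => s /andP [_ lt_s].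
rewrite [in LHS](_ : 2 * k = s + (m + (2 * k - m - s))); last lia.
rewrite big_bseqs_add (eq_bigr _ (fun A _ => big_bseqs_add _ _ _ _)) exchange_big /=.
rewrite [RHS]big_mkcond; apply: eq_big_seq => W; rewrite mem_bseqs => /eqP size_W.
have block A : A \in bseqs s -> forall B, nfalls (take m (drop s (A ++ W ++ B))) = nfalls W.
  by rewrite mem_bseqs => /eqP size_A B; rewrite drop_size_cat // take_size_cat.
case: eqP => [<- | nfW].
  by apply: eq_big_seq => A /block blockA; apply: eq_bigr => B _; rewrite blockA eqxx andbT.
rewrite big1_seq // => A /block blockA; rewrite big1 // => B _.
by rewrite blockA (introF eqP nfW) andbF.
Qed.

Lemma sum_binomial_depth k l : l <= k ->
  \sum_(W <- bseqs k | nfalls W == l) 'C(k.+1, (nrises W + depth W).+1) = 'C(k, l) ^ 2.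
Proof.
move=> le_lk; rewrite -big_filter -(count_nfalls_bseqs le_lk) -size_filter.
set Wl := filter _ _; rewrite -(sum_count_ltn_leq Wl depth).
have count_Wl x : 2 * l <= k + x -> count (fun Y => x <= depth Y) Wl = 'C(k, k - l + x).
  move=> le_2l; rewrite count_filter -count_nfalls_depth_geq //.
  by apply: eq_count => Y; rewrite /= andbC.
apply: eq_big_seq => W; rewrite mem_filter mem_bseqs => /andP [/eqP fW /eqP size_W].
have := nrises_nfalls W; have := nfalls_leq_depth W; rewrite size_W fW => ? ?.
rewrite binS (count_Wl (depth W).+1) ?(count_Wl (depth W)); try lia.
by congr (binomial _ _ + binomial _ _); lia.
Qed.

Theorem corollary2 (k l : nat) : l <= k -> Skml k k l = 'C(k, l) ^ 2.
Proof.
move=> le_lk; rewrite Skml_completions; last lia.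
rewrite -(sum_binomial_depth le_lk) (_ : 2 * k - k = k); last lia.
rewrite big_seq_cond [RHS]big_seq_cond; apply: eq_bigr => W.
rewrite mem_bseqs => /andP [/eqP size_W _].
by rewrite dyck_completions_cuts -size_W sum_dyck_cuts.
Qed.
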